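(* For all positive integers $m$ and $k$, the Kneser graph $\mathrm{KG}(m(2k+1),mk)$ (whose odd girth is $2k+1$) admits an orientation in which every cycle of length $2k+1$ is alternating.
   Context: The Kneser graph $\mathrm{KG}(n,k)$ ($n\ge 2k$) has as vertices all $k$-element subsets of $\{1,\dots,n\}$, two being adjacent iff disjoint. The odd girth is the length of a shortest odd cycle. An orientation assigns each edge exactly one direction. In an oriented graph, a subgraph that is a cycle is called alternating if at most one of its vertices has both positive in-degree and positive out-degree within that cycle. *)

From mathcomp Require Import all_boot.
Set Implicit Arguments. Unset Strict Implicit. Unset Printing Implicit Defensive.

Definition KGvertex (n k : nat) := {A : {set 'I_n} | #|A| == k}.

Definition KGadj (n k : nat) : rel (KGvertex n k) :=
  fun A B => [disjoint val A & val B].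

(* An orientation of a graph with adjacency [adj] is a relation [o]
   (o u v meaning "the edge uv is directed from u to v") such that
   arcs only go along edges and every edge gets exactly one direction. *)
Definition is_orientation (T : finType) (adj : rel T) (o : rel T) : Prop :=
  (forall u v, o u v -> adj u v) /\
  (forall u v, adj u v -> o u v != o v u).

Definition is_cycle_of_length (T : finType) (adj : rel T) (L : nat) (s : seq T) : Prop :=
  [/\ size s = L, uniq s & cycle adj s].

Definition cyc_indeg_pos (T : finType) (o : rel T) (s : seq T) (x : T) : bool :=
  o (prev s x) x || o (next s x) x.
Definition cyc_outdeg_pos (T : finType) (o : rel T) (s : seq T) (x : T) : bool :=
  o x (prev s x) || o x (next s x).

Definition alternating (T : finType) (o : rel T) (s : seq T) : Prop :=
  #|[set x in s | cyc_indeg_pos o s x && cyc_outdeg_pos o s x]| <= 1.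

(* Fix a point z and orient every edge away from the vertices containing z,
   the remaining edges by an arbitrary linear order.  In a (2k+1)-cycle of
   KG(m(2k+1), mk) the vertices containing a given point form an independent
   set of the odd cycle, so each point lies in at most k of them; since the
   2k+1 vertices carry (2k+1)mk = m(2k+1)k incidences, every point, z in
   particular, lies in exactly k of them.  Hence exactly one edge of the cycle
   avoids z.  The vertices containing z are sources and their neighbours on
   the cycle are sinks, so a vertex with both in- and out-arcs is an end of
   that edge, namely the tail of its arc. *)

From mathcomp Require Import all_boot.
From mathcomp Require Import zify.

Set Implicit Arguments. Unset Strict Implicit. Unset Printing Implicit Defensive.

Section CycleCounting.
Variables (T : eqType) (adj : rel T).

Lemma perm_map_next (s : seq T) : uniq s -> perm_eq (map (next s) s) s.
Proof.
move=> Us; apply: uniq_perm => //.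
  by rewrite (map_inj_uniq (can_inj (prev_next Us))).
move=> y; apply/mapP/idP => [[x xs ->]|ys]; first by rewrite mem_next.
by exists (prev s y); rewrite ?mem_prev ?(next_prev Us).
Qed.

Definition independent (P : pred T) := forall u v, adj u v -> ~~ (P u && P v).

Definition gap (P : pred T) (s : seq T) (x : T) := ~~ P x && ~~ P (next s x).

(* Each vertex of an independent set P of the cycle s covers its two edges,
   and no edge is covered twice. *)
Lemma count_gap_independent (P : pred T) (s : seq T) :
  uniq s -> cycle adj s -> independent P ->
  count (gap P s) s + 2 * count P s = size s.
Proof.
move=> Us cyc_s P_indep.
have count_next : count (P \o next s) s = count P s.
  by rewrite -count_map (permP (perm_map_next Us)).
have no_double : count (predI P (P \o next s)) s = 0.
  by apply/eqP; rewrite -leqn0 leqNgt -has_count; apply/hasPn => x xs;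
     apply: P_indep (next_cycle cyc_s xs).
rewrite mul2n -addnn -{2}count_next -count_predUI no_double addn0 addnC.
rewrite -(count_predC (predU P (P \o next s))); congr (_ + _).
by apply: eq_count => x; rewrite /gap /= negb_or.
Qed.

End CycleCounting.

Section OrientAway.
Variables (T : finType) (adj : rel T) (P : pred T).
Hypotheses (adj_sym : symmetric adj) (adj_irr : irreflexive adj).
Hypothesis P_indep : independent adj P.

Definition orient_away : rel T :=
  fun u v => adj u v && (P u || ~~ P v && (enum_rank u < enum_rank v)).

Lemma orient_awayC u v : adj u v -> orient_away v u = ~~ orient_away u v.
Proof.
move=> uv; have := P_indep uv; rewrite /orient_away uv adj_sym uv /=.
have neq_rank : enum_rank u != enum_rank v.
  by apply: contraTneq uv => /enum_rank_inj ->; rewrite adj_irr.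
by case: (P u); case: (P v) => //= _; rewrite ltn_neqAle eq_sym neq_rank -ltnNge.
Qed.

Lemma orient_away_orientation : is_orientation adj orient_away.
Proof.
split=> [u v /andP[] // | u v uv].
by rewrite (orient_awayC uv); case: (orient_away u v).
Qed.

Lemma orient_away_toP u v : adj u v -> P v -> orient_away u v = false.
Proof.
move=> uv Pv; have := P_indep uv; rewrite /orient_away uv Pv andbT /=.
by case: (P u).
Qed.

Lemma orient_away_fromNP u v : orient_away u v -> ~~ P u -> ~~ P v.
Proof. by case/andP=> _; case: (P u) => //= /andP[]. Qed.

Lemma mixed_vertex_gap (s : seq T) x :
  uniq s -> cycle adj s -> x \in s ->
  cyc_indeg_pos orient_away s x -> cyc_outdeg_pos orient_away s x ->
  exists2 y, y \in s & gap P s y /\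
    x = (if orient_away y (next s y) then y else next s y).
Proof.
move=> Us cyc_s xs indeg outdeg.
have prev_x := prev_cycle cyc_s xs; have next_x := next_cycle cyc_s xs.
have NPx : ~~ P x.
  have next_to_x : adj (next s x) x by rewrite adj_sym.
  apply: contraTN indeg => Px.
  by rewrite /cyc_indeg_pos (orient_away_toP prev_x Px)
             (orient_away_toP next_to_x Px).
case/orP: outdeg => [to_prev | to_next].
- exists (prev s x); first by rewrite mem_prev.
  rewrite /gap (next_prev Us) (orient_away_fromNP to_prev NPx) NPx.
  have := orient_awayC prev_x; rewrite to_prev => /esym/negbTE ->.
  by split.
- by exists x; rewrite // /gap NPx (orient_away_fromNP to_next NPx) to_next.
Qed.

Lemma alternating_orient_away (s : seq T) :
  uniq s -> cycle adj s -> count (gap P s) s <= 1 -> alternating orient_away s.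
Proof.
move=> Us cyc_s gap_le1.
pose arc_tail y := if orient_away y (next s y) then y else next s y.
have mixed_sub : [set x in s | cyc_indeg_pos orient_away s x &&
                                cyc_outdeg_pos orient_away s x]
                 \subset arc_tail @: [set y in s | gap P s y].
  apply/subsetP => x; rewrite inE => /andP[xs /andP[indeg outdeg]].
  have [y ys [gap_y ->]] := mixed_vertex_gap Us cyc_s xs indeg outdeg.
  by apply: imset_f; rewrite inE ys.
have card_gaps : #|[set y in s | gap P s y]| = count (gap P s) s.
  have -> : [set y in s | gap P s y] = [set y in filter (gap P s) s].
    by apply/setP => y; rewrite !inE mem_filter andbC.
  by rewrite cardsE (card_uniqP (filter_uniq _ Us)) size_filter.
rewrite /alternating (leq_trans (subset_leq_card mixed_sub)) //.
by rewrite (leq_trans (leq_imset_card _ _)) ?card_gaps.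
Qed.

End OrientAway.

Lemma sum_eq_bound (I : finType) (f : I -> nat) k :
  (forall i, f i <= k) -> \sum_i f i = #|I| * k -> forall i, f i = k.
Proof.
move=> f_le sum_f i; apply/eqP; rewrite eqn_leq f_le -subn_eq0 /=.
have slack : \sum_j (k - f j) + \sum_j f j = #|I| * k.
  by rewrite -big_split /= -sum_nat_const; apply: eq_bigr => j _; rewrite subnK.
have /eqP : \sum_j (k - f j) = 0.
  by apply/eqP; rewrite -(eqn_add2r (\sum_j f j)) slack sum_f.
by rewrite sum_nat_eq0 => /forallP/(_ i).
Qed.

Section KneserCycles.
Variables n r : nat.
Local Notation V := (KGvertex n r).

Lemma KGadj_sym : symmetric (@KGadj n r).
Proof. by move=> u v; rewrite /KGadj disjoint_sym. Qed.

Lemma KGadj_irr : 0 < r -> irreflexive (@KGadj n r).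
Proof.
move=> r_gt0 u; apply/negP => /disjoint_setI0; rewrite setIid => u0.
by have := valP u; rewrite u0 cards0 eq_sym (gtn_eqF r_gt0).
Qed.

Definition has_point (v : 'I_n) : pred V := fun u => v \in val u.

Lemma has_point_indep v : independent (@KGadj n r) (has_point v).
Proof.
by move=> u w uw; apply/andP => -[vu]; rewrite /has_point (disjointFr uw vu).
Qed.

Lemma sum_count_has_point (s : seq V) :
  \sum_v count (has_point v) s = size s * r.
Proof.
transitivity (\sum_(u <- s) #|val u|); last first.
  rewrite (eq_bigr (fun=> r)) => [|u _]; last exact: eqP (valP u).
  by rewrite big_const_seq count_predT iter_addn_0 mulnC.
transitivity (\sum_v \sum_(u <- s) (v \in val u)).
  apply: eq_bigr => v _; rewrite -sum1_count big_mkcond.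
  by apply: eq_bigr => u _; rewrite /has_point; case: ifP.
rewrite exchange_big; apply: eq_bigr => u _.
by rewrite -sum1_card [RHS]big_mkcond; apply: eq_bigr => v _; case: ifP.
Qed.

Lemma count_has_point_odd_cycle k (s : seq V) v :
  is_cycle_of_length (@KGadj n r) (2 * k + 1) s -> count (has_point v) s <= k.
Proof.
case=> size_s Us cyc_s.
have := count_gap_independent Us cyc_s (has_point_indep v).
by rewrite size_s; move: (count _ _) (count _ _) => g c; lia.
Qed.

Lemma count_has_point_tight k (s : seq V) v :
  n * k = (2 * k + 1) * r -> is_cycle_of_length (@KGadj n r) (2 * k + 1) s ->
  count (has_point v) s = k.
Proof.
move=> nk s_cycle; apply: (sum_eq_bound (f := fun w => count (has_point w) s)).
  by move=> w; apply: count_has_point_odd_cycle.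
by case: s_cycle => size_s _ _; rewrite sum_count_has_point card_ord size_s nk.
Qed.

End KneserCycles.

Theorem mainTheorem14 (m k : nat) (hm : 0 < m) (hk : 0 < k) :
  exists o : rel (KGvertex (m * (2 * k + 1)) (m * k)),
    is_orientation (@KGadj _ _) o /\
    forall s : seq (KGvertex (m * (2 * k + 1)) (m * k)),
      is_cycle_of_length (@KGadj _ _) (2 * k + 1) s -> alternating o s.
Proof.
have n_gt0 : 0 < m * (2 * k + 1) by rewrite muln_gt0 hm addn1.
have r_gt0 : 0 < m * k by rewrite muln_gt0 hm hk.
have irr := @KGadj_irr (m * (2 * k + 1)) _ r_gt0.
pose z := Ordinal n_gt0.
exists (orient_away (@KGadj _ _) (has_point z)); split.
  exact: orient_away_orientation (@KGadj_sym _ _) irr (has_point_indep z).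
move=> s s_cycle.
have [size_s Us cyc_s] := s_cycle.
apply: (alternating_orient_away (@KGadj_sym _ _) irr (has_point_indep z) Us cyc_s).
have nk : m * (2 * k + 1) * k = (2 * k + 1) * (m * k) by rewrite mulnCA mulnA.
have := count_gap_independent Us cyc_s (has_point_indep z).
by rewrite (count_has_point_tight z nk s_cycle) size_s; lia.
Qed.
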